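(* Let $n\ge3$, $n\ne4$, and for $a\in\mathbb{B}^n$ define on $\overline{\mathbb{B}^n}$ $$U_a(x)=\Big(\frac{1-|a|^2}{|a|^2|x|^2-2a\cdot x+1}\Big)^{\frac{n-4}2}+\frac{n-4}4(1-|x|^2)\Big(\frac{1-|a|^2}{|a|^2|x|^2-2a\cdot x+1}\Big)^{\frac{n-2}2}.$$ Then $U_a\in C^\infty(\overline{\mathbb{B}^n})$, $U_a>0$, and with $u=U_a|_{\mathbb{S}^{n-1}}$ it solves $$\Delta^2U_a=0\ \text{in }\mathbb{B}^n,\qquad \frac{\partial U_a}{\partial r}=-\frac{n-4}2u\ \text{on }\mathbb{S}^{n-1},\qquad \mathscr{B}_3^3U_a=\frac{n(n-2)(n-4)}4u^{\frac{n+2}{n-4}}\ \text{on }\mathbb{S}^{n-1}.$$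
   Context: For $U$ smooth on $\overline{\mathbb{B}^n}$ satisfying $\partial_rU=-\frac{n-4}2u$ on $\mathbb{S}^{n-1}$ with $u=U|_{\mathbb{S}^{n-1}}$, $$\mathscr{B}_3^3U=-\frac{\partial\Delta U}{\partial r}-\frac{n-4}2\frac{\partial^2U}{\partial r^2}-\frac n2\Delta_{\mathbb{S}^{n-1}}u+\frac{(n-4)(n^2-3n+4)}4u\quad\text{on }\mathbb{S}^{n-1}.$$ *)

From HB Require Import structures.
From mathcomp Require Import all_boot all_order all_algebra.
From mathcomp Require Import all_classical all_reals all_analysis.
Set Implicit Arguments. Unset Strict Implicit. Unset Printing Implicit Defensive.
Import Order.TTheory GRing.Theory Num.Theory.
Import numFieldNormedType.Exports.
Local Open Scope ring_scope.

Section Defs.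
Variables (R : realType) (n : nat).
Implicit Types (x y a : 'rV[R]_n) (f : 'rV[R]_n -> R).

Definition edot x y : R := \sum_(i < n) x ord0 i * y ord0 i.
Definition enorm2 x : R := edot x x.
Definition enorm x : R := Num.sqrt (enorm2 x).

Definition ebasis (i : 'I_n) : 'rV[R]_n := delta_mx ord0 i.
Definition partial (i : 'I_n) f : 'rV[R]_n -> R := fun x => 'D_(ebasis i) f x.

Definition iter_partial (s : seq 'I_n) f : 'rV[R]_n -> R :=
  foldr (fun i g => partial i g) f s.

Definition smooth_on (O : set 'rV[R]_n) f : Prop :=
  forall (s : seq 'I_n) x, O x -> differentiable (iter_partial s f) x.

Definition lap f : 'rV[R]_n -> R := fun x => \sum_(i < n) partial i (partial i f) x.

(* radial derivatives at a point x of the unit sphere: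
   d/dt U(t x) at t = 1 and d^2/dt^2 U(t x) at t = 1 *)
Definition drad f x : R := 'D_x f x.
Definition drad2 f x : R := 'D_x ('D_x f) x.

(* Laplace-Beltrami operator of the sphere applied to u = U|_{S^{n-1}}:
   Euclidean Laplacian of the 0-homogeneous extension y |-> U(y/|y|) *)
Definition sph_lap f x : R := lap (fun y => f ((enorm y)^-1 *: y)) x.

Definition B33 f x : R :=
  - drad (lap f) x - ((n%:R - 4) / 2) * drad2 f x
  - (n%:R / 2) * sph_lap f x
  + ((n%:R - 4) * (n%:R ^+ 2 - 3 * n%:R + 4) / 4) * f x.

Definition Ua a : 'rV[R]_n -> R := fun x =>
  let q := (1 - enorm2 a) / (enorm2 a * enorm2 x - 2 * edot a x + 1) in
  q `^ ((n%:R - 4) / 2)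
  + ((n%:R - 4) / 4) * (1 - enorm2 x) * q `^ ((n%:R - 2) / 2).

End Defs.

From HB Require Import structures.
From mathcomp Require Import all_boot all_order all_algebra.
From mathcomp Require Import all_classical all_reals all_analysis.
From mathcomp Require Import ring lra.
Set Implicit Arguments. Unset Strict Implicit. Unset Printing Implicit Defensive.
Import Order.TTheory GRing.Theory Num.Theory.
Import numFieldNormedType.Exports.
Local Open Scope ring_scope.
Local Open Scope classical_set_scope.

(* U_a depends on x only through s = |x|^2 and t = a.x, and so do all its
   derivatives: for F(s, t) the chain rule gives d_i F = 2 x_i F_s + a_i F_t,
   hence Delta F = 2n F_s + 4s F_ss + 2t (F_st + F_ts) + |a|^2 F_tt.  Such
   functions are represented by a small syntax of terms in s, t and real powers,
   closed under symbolic differentiation.  Where the denominator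
   W = |a|^2 s - 2t + 1 is positive (an open set containing the closed ball),
   Delta^2 U_a, the radial derivatives and B_3^3 U_a thus become explicit
   expressions in s, t, A = 1 - |a|^2 and W^(-(n-4)/2), and every identity of the
   theorem is a rational identity checked by [field].  The spherical Laplacian is
   handled alike, since the 0-homogeneous extension of u is the same expression
   with s = 1 and t = a.y/|y|. *)

Section NearEqDifferentiable.
Variables (R : numFieldType) (V W : normedModType R).

Lemma differentiable_near_eq (f g : V -> W) x : differentiable f x ->
  (\forall y \near x, f y = g y) -> differentiable g x.
Proof.
move=> df fg.
have gx : g x = f x by rewrite (nbhs_singleton fg).
have /eqaddoP hf := diff_locally df.
have fg0 : \forall h \near 0, f (h + x) = g (h + x).
  by move: fg; rewrite (near_shift 0) => /=; apply: filterS => h; rewrite subr0.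
have eqg : g \o shift x = cst (g x) + 'd f x +o_ 0 id.
  apply/eqaddoP => e e0.
  have := hf e e0; apply: filter_app; move: fg0; apply: filter_app.
  by apply: filterE => h /= E; rewrite !fctE /= -E gx.
have dg := diff_unique (diff_continuous df) eqg.
by apply/diff_locallyP; rewrite dg; split => //; exact: diff_continuous.
Qed.

End NearEqDifferentiable.

Section PowRChainRule.
Variables (R : realType) (V : normedModType R).

Lemma differentiable_powR (f : V -> R) (r : R) x :
  0 < f x -> differentiable f x -> differentiable (fun y => f y `^ r) x.
Proof.
move=> fx df; apply: (@differentiable_comp _ _ _ _ f (fun z : R => z `^ r)) => //.
by apply/derivable1_diffP; apply: derivable_powR; rewrite in_itv /= fx.
Qed.

Lemma derive_powR (f : V -> R) (r : R) x v :
  0 < f x -> differentiable f x ->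
  'D_v (fun y => f y `^ r) x = r * f x `^ (r - 1) * 'D_v f x.
Proof.
move=> fx df.
have dp : differentiable (fun z : R => z `^ r) (f x).
  by apply/derivable1_diffP; apply: derivable_powR; rewrite in_itv /= fx.
rewrite deriveE; last exact: differentiable_powR.
rewrite (@diff_comp _ _ _ _ f (fun z : R => z `^ r)) // /= diff1E //.
by rewrite powR_derive1 ?in_itv /= ?fx // -deriveE // /GRing.scale /= mulrC.
Qed.

End PowRChainRule.

Lemma powRD_gt0 (R : realType) (x r s : R) : 0 < x -> x `^ (r + s) = x `^ r * x `^ s.
Proof. by move=> x0; apply: powRD; apply/implyP => _; exact: lt0r_neq0. Qed.

Lemma powR_div (R : realType) (b w r : R) : 0 <= b -> 0 < w ->
  (b / w) `^ r = b `^ r * w `^ (- r).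
Proof.
move=> b0 w0; rewrite powRM // ?invr_ge0 ?ltW //.
by rewrite -powR_inv1 ?ltW // -powRrM mulN1r.
Qed.

Lemma powR_critical (R : realType) (N p w : R) : N != 4 -> 0 < p -> 0 < w ->
  (p `^ ((N - 4) / 2) * w `^ (- ((N - 4) / 2))) `^ ((N + 2) / (N - 4)) =
  p `^ ((N - 4) / 2) * p ^+ 3 * (w `^ (- ((N - 4) / 2)) * w ^- 3).
Proof.
move=> N4 p0 w0; have N40 : N - 4 != 0 by rewrite subr_eq0.
rewrite powRM ?powR_ge0 // -!powRrM.
have -> : (N - 4) / 2 * ((N + 2) / (N - 4)) = (N - 4) / 2 + 3%:R by field.
have -> : - ((N - 4) / 2) * ((N + 2) / (N - 4)) = - ((N - 4) / 2) + - 3%:R by field.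
by rewrite (powRD_gt0 _ _ p0) powR_mulrn ?ltW // (powRD_gt0 _ _ w0) powR_invn ?ltW.
Qed.

Lemma derive_coord (R : realType) (m p : nat) (i : 'I_m) (j : 'I_p) (x v : 'M[R]_(m, p)) :
  'D_v (fun M : 'M[R]_(m, p) => M i j) x = v i j.
Proof.
have coord_linear : linear (fun M : 'M[R]_(m, p) => M i j).
  by move=> c M N; rewrite !mxE.
pose f : {linear 'M[R]_(m, p) -> R} :=
  HB.pack (fun M : 'M[R]_(m, p) => M i j) (GRing.isLinear.Build _ _ _ _ _ coord_linear).
rewrite (_ : (fun _ => _) = f) // deriveE ?diff_lin //;
  [exact: coord_continuous | exact/linear_differentiable/coord_continuous].
Qed.

Section EuclideanCalculus.
Variables (R : realType) (n : nat).
Local Notation V := 'rV[R]_n.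
Implicit Types (b x y v : V).

Lemma edotC x y : edot x y = edot y x.
Proof. by apply: eq_bigr => i _; rewrite mulrC. Qed.

Lemma edot_ebasis i y : edot (ebasis R i) y = y ord0 i.
Proof.
rewrite /edot (bigD1 i) //= !mxE !eqxx mul1r big1 ?addr0 // => j ji.
by rewrite !mxE eqxx (negbTE ji) mul0r.
Qed.

Lemma edotZr b (c : R) y : edot b (c *: y) = c * edot b y.
Proof. by rewrite /edot mulr_sumr; apply: eq_bigr => i _; rewrite !mxE; ring. Qed.

Lemma enorm2Z (c : R) y : enorm2 (c *: y) = c ^+ 2 * enorm2 y.
Proof. by rewrite /enorm2 /edot mulr_sumr; apply: eq_bigr => i _; rewrite !mxE; ring. Qed.

Lemma enorm2_sub_ge0 (p q : R) x y :
  0 <= p ^+ 2 * enorm2 y - 2 * p * q * edot x y + q ^+ 2 * enorm2 x.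
Proof.
have -> : p ^+ 2 * enorm2 y - 2 * p * q * edot x y + q ^+ 2 * enorm2 x =
    \sum_(i < n) (p * y ord0 i - q * x ord0 i) ^+ 2.
  rewrite /enorm2 /edot !mulr_sumr -sumrN -!big_split /=.
  by apply: eq_bigr => i _; ring.
by apply: sumr_ge0 => i _; rewrite sqr_ge0.
Qed.

Lemma enorm2_ge0 y : 0 <= enorm2 y.
Proof. by apply: sumr_ge0 => i _; rewrite -expr2 sqr_ge0. Qed.

Lemma enorm2E y : enorm2 y = enorm y ^+ 2.
Proof. by rewrite sqr_sqrtr ?enorm2_ge0. Qed.

Lemma enorm2_le1 y : enorm y <= 1 -> enorm2 y <= 1.
Proof. by move=> y1; rewrite enorm2E expr_le1 ?sqrtr_ge0. Qed.

Lemma enorm2_lt1 y : enorm y < 1 -> enorm2 y < 1.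
Proof. by move=> y1; rewrite enorm2E expr_lt1 ?sqrtr_ge0. Qed.

Lemma enorm2_eq1 y : enorm y = 1 -> enorm2 y = 1.
Proof. by move=> y1; rewrite enorm2E y1 expr1n. Qed.

Let coord i : V -> R := fun y => y ord0 i.

Let coord_derivable i x v : derivable (coord i) x v.
Proof. exact/diff_derivable/differentiable_coord. Qed.

Let edot_sum b : edot b = \sum_(i < n) (b ord0 i *: coord i).
Proof. by apply/funext => y; rewrite fct_sumE. Qed.

Let enorm2_sum : @enorm2 R n = \sum_(i < n) (coord i * coord i : V -> R).
Proof. by apply/funext => y; rewrite fct_sumE. Qed.

Lemma differentiable_edot b x : differentiable (edot b) x.
Proof.
rewrite edot_sum; apply: differentiable_sum => i.
exact/differentiableZ/differentiable_coord.
Qed.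

Lemma derive_edot b x v : 'D_v (edot b) x = edot b v.
Proof.
rewrite {1}edot_sum derive_sum => [|i]; last exact: derivableZ.
by apply: eq_bigr => i _; rewrite deriveZ // derive_coord.
Qed.

Lemma differentiable_enorm2 x : differentiable (@enorm2 R n) x.
Proof.
rewrite enorm2_sum; apply: differentiable_sum => i.
by apply: differentiableM; exact: differentiable_coord.
Qed.

Lemma derive_enorm2 x v : 'D_v (@enorm2 R n) x = 2 * edot v x.
Proof.
rewrite enorm2_sum derive_sum => [|i]; last exact: derivableM.
rewrite /edot mulr_sumr; apply: eq_bigr => i _.
by rewrite deriveM // !derive_coord /coord /GRing.scale /=; ring.
Qed.

End EuclideanCalculus.

Inductive term (R : realType) (n : nat) :=
  | TCst of R | TZero | TOne | TNorm2 | TDot of 'rV[R]_n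
  | TAdd of term R n & term R n | TMul of term R n & term R n
  | TPow of term R n & R.
Arguments TCst {R n}. Arguments TZero {R n}. Arguments TOne {R n}.
Arguments TNorm2 {R n}. Arguments TDot {R n}. Arguments TAdd {R n}.
Arguments TMul {R n}. Arguments TPow {R n}.

Section Terms.
Variables (R : realType) (n : nat).
Local Notation V := 'rV[R]_n.
Local Notation term := (term R n).
Implicit Types (x y v b : V) (e : term).

Fixpoint teval x e : R :=
  match e with
  | TCst r => r | TZero => 0 | TOne => 1
  | TNorm2 => enorm2 x | TDot b => edot b x
  | TAdd e1 e2 => teval x e1 + teval x e2
  | TMul e1 e2 => teval x e1 * teval x e2
  | TPow e r => teval x e `^ r
  end.

(* Smart constructors: they keep symbolic derivatives small enough for [field]. *)
Definition tadd e1 e2 : term :=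
  match e1, e2 with TZero, _ => e2 | _, TZero => e1 | _, _ => TAdd e1 e2 end.
Definition tmul e1 e2 : term :=
  match e1, e2 with
  | TZero, _ | _, TZero => TZero | TOne, _ => e2 | _, TOne => e1
  | _, _ => TMul e1 e2
  end.
#[global] Arguments tadd : simpl never.
#[global] Arguments tmul : simpl never.

Lemma teval_tadd x e1 e2 : teval x (tadd e1 e2) = teval x e1 + teval x e2.
Proof. by case: e1; case: e2 => * /=; rewrite ?add0r ?addr0. Qed.

Lemma teval_tmul x e1 e2 : teval x (tmul e1 e2) = teval x e1 * teval x e2.
Proof. by case: e1; case: e2 => * /=; rewrite ?mul0r ?mulr0 ?mul1r ?mulr1. Qed.

Fixpoint tdefined x e : Prop :=
  match e with
  | TAdd e1 e2 | TMul e1 e2 => tdefined x e1 /\ tdefined x e2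
  | TPow e _ => 0 < teval x e /\ tdefined x e
  | _ => True
  end.

Lemma tdefined_tadd x e1 e2 :
  tdefined x e1 -> tdefined x e2 -> tdefined x (tadd e1 e2).
Proof. by case: e1; case: e2. Qed.

Lemma tdefined_tmul x e1 e2 :
  tdefined x e1 -> tdefined x e2 -> tdefined x (tmul e1 e2).
Proof. by case: e1; case: e2. Qed.

Fixpoint tderiv (d_norm2 : term) (d_dot : V -> term) e : term :=
  match e with
  | TCst _ | TZero | TOne => TZero
  | TNorm2 => d_norm2
  | TDot b => d_dot b
  | TAdd e1 e2 => tadd (tderiv d_norm2 d_dot e1) (tderiv d_norm2 d_dot e2)
  | TMul e1 e2 => tadd (tmul (tderiv d_norm2 d_dot e1) e2)
                       (tmul e1 (tderiv d_norm2 d_dot e2))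
  | TPow e r => tmul (TMul (TCst r) (TMul (TPow e r) (TPow e (-1))))
                     (tderiv d_norm2 d_dot e)
  end.

Lemma tdefined_tderiv x d_norm2 d_dot e :
  tdefined x d_norm2 -> (forall b, tdefined x (d_dot b)) ->
  tdefined x e -> tdefined x (tderiv d_norm2 d_dot e).
Proof.
move=> dn dd; elim: e => //= [e1 IH1 e2 IH2 [h1 h2]|e1 IH1 e2 IH2 [h1 h2]|e IH r [h0 h]].
- by apply: tdefined_tadd; auto.
- by apply: tdefined_tadd; apply: tdefined_tmul; auto.
- by apply: tdefined_tmul; auto.
Qed.

Definition tdir v : term -> term :=
  tderiv (TMul (TCst 2) (TDot v)) (fun b => TCst (edot b v)).

Lemma tdefined_tdir x v e : tdefined x e -> tdefined x (tdir v e).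
Proof. exact: tdefined_tderiv. Qed.

Lemma teval_derive x e : tdefined x e ->
  differentiable (teval^~ e) x /\ forall v, 'D_v (teval^~ e) x = teval x (tdir v e).
Proof.
elim: e => /= [r||||b|e1 IH1 e2 IH2 [/IH1[d1 D1] /IH2[d2 D2]]|e1 IH1 e2 IH2 [/IH1[d1 D1] /IH2[d2 D2]]|e IH r [p /IH[d D]]].
- by split=> [|v]; [exact: differentiable_cst | exact: derive_cst].
- by split=> [|v]; [exact: differentiable_cst | exact: derive_cst].
- by split=> [|v]; [exact: differentiable_cst | exact: derive_cst].
- by split=> [|v]; [exact: differentiable_enorm2 | exact: derive_enorm2].
- by split=> [|v]; [exact: differentiable_edot | exact: derive_edot].
- split=> [|v]; first exact: differentiableD.
  by rewrite deriveD ?D1 ?D2 ?teval_tadd //; exact: diff_derivable.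
- split=> [|v]; first exact: differentiableM.
  rewrite deriveM ?D1 ?D2 /tdir /= ?teval_tadd ?teval_tmul; last 2 first.
  + exact: diff_derivable.
  + exact: diff_derivable.
  by rewrite /GRing.scale /= addrC mulrC.
- split=> [|v]; first exact: differentiable_powR.
  rewrite derive_powR // D teval_tmul /= powRD ?mulrA //.
  by apply/implyP => _; rewrite gt_eqF.
Qed.

Definition tdirs (s : seq 'I_n) e : term := foldr (fun i => tdir (ebasis R i)) e s.

Lemma tdefined_tdirs x s e : tdefined x e -> tdefined x (tdirs s e).
Proof. by elim: s => //= i s IH /IH; apply: tdefined_tdir. Qed.

Section OnOpen.
Variable O : set V.
Hypothesis openO : open O.

Lemma iter_partial_eq (f g : V -> R) s : (forall y, O y -> f y = g y) ->
  forall y, O y -> iter_partial s f y = iter_partial s g y.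
Proof.
move=> fg; elim: s => [|i s IH] y Oy /=; first exact: fg.
apply: near_eq_derive; have := open_nbhs_nbhs (conj openO Oy).
by apply: filterS => z; exact: IH.
Qed.

Lemma lap_eq (f g : V -> R) y : (forall z, O z -> f z = g z) -> O y ->
  lap f y = lap g y.
Proof. by move=> fg Oy; apply: eq_bigr => i _; exact: (iter_partial_eq [:: i; i] fg). Qed.

Lemma smooth_on_eq (f g : V -> R) : (forall y, O y -> f y = g y) ->
  smooth_on O g -> smooth_on O f.
Proof.
move=> fg sg s x Ox; apply: (differentiable_near_eq (sg s x Ox)).
have := open_nbhs_nbhs (conj openO Ox); apply: filterS => y Oy.
by rewrite (iter_partial_eq s fg Oy).
Qed.

Variable e : term.
Hypothesis e_defined : forall y, O y -> tdefined y e.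

Lemma iter_partial_teval s y : O y -> iter_partial s (teval^~ e) y = teval y (tdirs s e).
Proof.
elim: s y => [|i s IH] y Oy //=.
rewrite /partial (@near_eq_derive _ _ _ _ (teval^~ (tdirs s e))).
  by rewrite (teval_derive (tdefined_tdirs s (e_defined Oy))).2.
by have := open_nbhs_nbhs (conj openO Oy); apply: filterS => z; exact: IH.
Qed.

Lemma smooth_on_teval : smooth_on O (teval^~ e).
Proof.
move=> s x Ox; apply: (differentiable_near_eq (teval_derive (tdefined_tdirs s (e_defined Ox))).1).
have := open_nbhs_nbhs (conj openO Ox); apply: filterS => y Oy /=.
by rewrite iter_partial_teval.
Qed.

Lemma derive_teval_eq (f : V -> R) v y : (forall z, O z -> f z = teval z e) ->
  O y -> 'D_v f y = teval y (tdir v e).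
Proof.
move=> fe Oy; rewrite (@near_eq_derive _ _ _ _ (teval^~ e)).
  exact: (teval_derive (e_defined Oy)).2.
by have := open_nbhs_nbhs (conj openO Oy); apply: filterS => z; exact: fe.
Qed.

Lemma open_teval_gt0 : open (O `&` [set y | 0 < teval y e]).
Proof.
rewrite openE => y [Oy ey].
have ce : {for y, continuous (teval^~ e)}.
  exact/differentiable_continuous/(teval_derive (e_defined Oy)).1.
have e_near : \forall z \near y, 0 < teval z e.
  by apply: (ce [set r | 0 < r]); apply: open_nbhs_nbhs; split => //; exact: open_gt.
by apply: filterS2 (open_nbhs_nbhs (conj openO Oy)) e_near.
Qed.

End OnOpen.

End Terms.

Arguments teval {R n} x e.

Section RadialDotTerms.
Variables (R : realType) (n : nat) (a : 'rV[R]_n).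
Local Notation V := 'rV[R]_n.
Local Notation term := (term R n).
Implicit Types (x y v : V) (e : term).

(* [e] depends on [x] only through [s = |x|^2] and [t = a.x]. *)
Fixpoint tdot_only e : Prop :=
  match e with
  | TDot b => b = a
  | TAdd e1 e2 | TMul e1 e2 => tdot_only e1 /\ tdot_only e2
  | TPow e _ => tdot_only e
  | _ => True
  end.

Lemma tdot_only_tadd e1 e2 : tdot_only e1 -> tdot_only e2 -> tdot_only (tadd e1 e2).
Proof. by case: e1; case: e2. Qed.

Lemma tdot_only_tmul e1 e2 : tdot_only e1 -> tdot_only e2 -> tdot_only (tmul e1 e2).
Proof. by case: e1; case: e2. Qed.

Lemma tdot_only_tderiv d_norm2 d_dot e :
  tdot_only d_norm2 -> tdot_only (d_dot a) -> tdot_only e ->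
  tdot_only (tderiv d_norm2 d_dot e).
Proof.
move=> dn dd; elim: e => //= [b ->|e1 IH1 e2 IH2 [h1 h2]|e1 IH1 e2 IH2 [h1 h2]|e IH r h] //.
- by apply: tdot_only_tadd; auto.
- by apply: tdot_only_tadd; apply: tdot_only_tmul; auto.
- by apply: tdot_only_tmul; auto.
Qed.

Definition tds : term -> term := tderiv TOne (fun _ => TZero).
Definition tdt : term -> term := tderiv TZero (fun _ => TOne).

Lemma teval_tdir x v e : tdot_only e ->
  teval x (tdir v e) = 2 * edot v x * teval x (tds e) + edot a v * teval x (tdt e).
Proof.
elim: e => /= [r||||b ->|e1 IH1 e2 IH2 [/IH1 + /IH2]|e1 IH1 e2 IH2 [/IH1 + /IH2]|e IH r /IH];
  rewrite /tdir /tds /tdt /= ?teval_tadd ?teval_tmul /=.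
1-5: by move=> *; ring.
1,2: by move=> -> ->; ring.
by move=> ->; ring.
Qed.

Lemma tdefined_tds x e : tdefined x e -> tdefined x (tds e).
Proof. exact: tdefined_tderiv. Qed.

Lemma tdefined_tdt x e : tdefined x e -> tdefined x (tdt e).
Proof. exact: tdefined_tderiv. Qed.

Lemma tdot_only_tds e : tdot_only e -> tdot_only (tds e).
Proof. exact: tdot_only_tderiv. Qed.

Lemma tdot_only_tdt e : tdot_only e -> tdot_only (tdt e).
Proof. exact: tdot_only_tderiv. Qed.

Definition tlap e : term :=
  TAdd (TAdd (TAdd (TAdd
    (TMul (TCst (2 * n%:R)) (tds e))
    (TMul (TMul (TCst 4) TNorm2) (tds (tds e))))
    (TMul (TMul (TCst 2) (TDot a)) (tds (tdt e))))
    (TMul (TMul (TCst 2) (TDot a)) (tdt (tds e))))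
    (TMul (TCst (enorm2 a)) (tdt (tdt e))).

Lemma tdefined_tlap x e : tdefined x e -> tdefined x (tlap e).
Proof. by move=> h; rewrite /tlap /=; auto 8 using tdefined_tds, tdefined_tdt. Qed.

Lemma tdot_only_tlap e : tdot_only e -> tdot_only (tlap e).
Proof. by move=> h; rewrite /tlap /=; auto 8 using tdot_only_tds, tdot_only_tdt. Qed.

Lemma lap_teval (O : set V) e x : open O -> (forall y, O y -> tdefined y e) ->
  tdot_only e -> O x -> lap (teval^~ e) x = teval x (tlap e).
Proof.
move=> oO de te Ox.
pose G i := TAdd (TMul (TMul (TCst 2) (TDot (ebasis R i))) (tds e))
                 (TMul (TCst (edot a (ebasis R i))) (tdt e)).
have partial2 i : partial i (partial i (teval^~ e)) x =
    2 * teval x (tds e) + 4 * teval x (tds (tds e)) * (x ord0 i * x ord0 i)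
    + 2 * teval x (tdt (tds e)) * (a ord0 i * x ord0 i)
    + 2 * teval x (tds (tdt e)) * (a ord0 i * x ord0 i)
    + teval x (tdt (tdt e)) * (a ord0 i * a ord0 i).
  rewrite /partial (@near_eq_derive _ _ _ _ (teval^~ (G i))); last first.
    have := open_nbhs_nbhs (conj oO Ox); apply: filterS => y Oy /=.
    by rewrite (teval_derive (de y Oy)).2 teval_tdir.
  have dG : tdefined x (G i) by rewrite /G /=; auto using tdefined_tds, tdefined_tdt.
  rewrite (teval_derive dG).2 /= !teval_tadd !teval_tmul /=.
  have tS := tdot_only_tds te; have tT := tdot_only_tdt te.
  rewrite !teval_tdir // !edot_ebasis [edot a _]edotC edot_ebasis /ebasis !mxE !eqxx /=.
  ring.
rewrite /lap (eq_bigr _ (fun i _ => partial2 i)) !big_split /= -!mulr_sumr sumr_const card_ord.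
by rewrite /tlap /= /enorm2 /edot; ring.
Qed.

End RadialDotTerms.

Section UaAsTerm.
Variables (R : realType) (n : nat) (a : 'rV[R]_n).
Local Notation V := 'rV[R]_n.
Local Notation term := (term R n).
Local Notation N := (n%:R : R).
Local Notation alpha := ((N - 4) / 2).
Local Notation beta := ((N - 2) / 2).
Local Notation A := (1 - enorm2 a).
Implicit Types (x y : V) (es et : term).

Definition Uprofile (s t : R) : R :=
  let q := A / (enorm2 a * s - 2 * t + 1) in
  q `^ alpha + ((N - 4) / 4) * (1 - s) * q `^ beta.

Lemma UaE x : Ua a x = Uprofile (enorm2 x) (edot a x).
Proof. by []. Qed.

Definition Wterm es et : term :=
  TAdd (TAdd (TMul (TCst (enorm2 a)) es) (TMul (TCst (-2)) et)) (TCst 1).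

(* [Uprofile s t] with [q^r] split as [A^r * W^-r], so that only [W] carries powers. *)
Definition Uterm es et : term :=
  TAdd (TMul (TCst (A `^ alpha)) (TPow (Wterm es et) (- alpha)))
       (TMul (TMul (TCst ((N - 4) / 4)) (TAdd (TCst 1) (TMul (TCst (-1)) es)))
             (TMul (TCst (A `^ beta)) (TPow (Wterm es et) (- beta)))).

Lemma teval_Uterm y es et : 0 <= A -> 0 < teval y (Wterm es et) ->
  teval y (Uterm es et) = Uprofile (teval y es) (teval y et).
Proof.
rewrite /Uterm /Uprofile /= => A0 W0.
have -> : enorm2 a * teval y es - 2 * teval y et + 1 =
  enorm2 a * teval y es + -2 * teval y et + 1 by ring.
by rewrite !powR_div //; ring.
Qed.

Lemma tdefined_Uterm y es et : 0 < teval y (Wterm es et) ->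
  tdefined y es -> tdefined y et -> tdefined y (Uterm es et).
Proof. by move=> *; rewrite /=; repeat split. Qed.

Lemma tdot_only_Uterm es et : tdot_only a es -> tdot_only a et ->
  tdot_only a (Uterm es et).
Proof. by move=> *; rewrite /=; repeat split. Qed.

Lemma Ua_den_gt0 y : enorm a < 1 -> enorm y <= 1 ->
  0 < enorm2 a * enorm2 y + -2 * edot a y + 1.
Proof.
move=> ha hy; have s1 := enorm2_le1 hy; have A1 := enorm2_lt1 ha.
have A0 := enorm2_ge0 a.
set mu := (1 + enorm2 a) / 2.
have := enorm2_sub_ge0 mu 1 a y; rewrite expr1n mulr1 mul1r => sq_ge0.
have mu0 : 0 < mu by rewrite /mu; lra.
set s := enorm2 y in sq_ge0 s1 *; set t := edot a y in sq_ge0 *.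
have h1 : 0 <= (mu * (mu - enorm2 a)) * (1 - s) by rewrite !mulr_ge0 // /mu; lra.
have sq : 0 < (1 - enorm2 a) ^+ 2 by rewrite exprn_gt0 // subr_gt0.
suff : 0 < mu * (enorm2 a * s + -2 * t + 1) by rewrite pmulr_rgt0.
(* completing the square with the weight [mu] halfway between [|a|^2] and 1 *)
have -> : mu * (enorm2 a * s + -2 * t + 1) = (mu ^+ 2 * s - 2 * mu * t + enorm2 a)
    + (mu * (mu - enorm2 a)) * (1 - s) + (1 - enorm2 a) ^+ 2 / 4 by rewrite /mu; field.
move: sq_ge0 h1 sq; set P1 := mu ^+ 2 * s - _ + _; set P2 := _ * (1 - s).
set P3 := (1 - enorm2 a) ^+ 2; lra.
Qed.

Definition Uball : term := Uterm TNorm2 (TDot a).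
Definition Uball_domain : set V := [set y | 0 < teval y (Wterm TNorm2 (TDot a))].

Lemma open_Uball_domain : open Uball_domain.
Proof.
by have := open_teval_gt0 openT (e := Wterm TNorm2 (TDot a)); rewrite setTI; apply.
Qed.

Lemma closed_ball_Uball_domain y : enorm a < 1 -> enorm y <= 1 -> Uball_domain y.
Proof. exact: Ua_den_gt0. Qed.

Lemma Ua_Uball y : enorm a < 1 -> Uball_domain y -> Ua a y = teval y Uball.
Proof. by move=> ha Oy; rewrite UaE teval_Uterm // subr_ge0 ltW // enorm2_lt1. Qed.

Lemma tdefined_Uball y : Uball_domain y -> tdefined y Uball.
Proof. by move=> Oy; apply: tdefined_Uterm. Qed.

Lemma tdot_only_Uball : tdot_only a Uball.
Proof. exact: tdot_only_Uterm. Qed.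

(* [u(y / |y|)] is [Uprofile 1 (a.y / |y|)]: the 0-homogeneous extension of [u]. *)
Definition Usphere : term := Uterm (TCst 1) (TMul (TDot a) (TPow TNorm2 (- 2^-1))).
Definition Usphere_domain : set V :=
  [set y | 0 < enorm2 y] `&`
  [set y | 0 < teval y (Wterm (TCst 1) (TMul (TDot a) (TPow TNorm2 (- 2^-1))))].

Lemma open_Usphere_domain : open Usphere_domain.
Proof.
apply: open_teval_gt0 => [|y y0]; last by do !split.
by have := open_teval_gt0 openT (e := @TNorm2 R n); rewrite setTI; apply.
Qed.

Lemma sphere_Usphere_domain x : enorm a < 1 -> enorm x = 1 -> Usphere_domain x.
Proof.
move=> ha hx; have s1 := enorm2_eq1 hx.
split; first by rewrite /= s1.
rewrite /= s1 powR1 !mulr1.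
by have := @Ua_den_gt0 x ha; rewrite hx s1 mulr1; apply.
Qed.

Lemma Ua_Usphere y : enorm a < 1 -> Usphere_domain y ->
  Ua a ((enorm y)^-1 *: y) = teval y Usphere.
Proof.
move=> ha [y0 W0]; rewrite UaE teval_Uterm //; last by rewrite subr_ge0 ltW // enorm2_lt1.
have ny0 : 0 < enorm y by rewrite sqrtr_gt0.
rewrite enorm2Z edotZr /= powRN powR12_sqrt ?ltW //.
congr Uprofile; last exact: mulrC.
by rewrite exprVn enorm2E mulVf // sqrf_eq0 gt_eqF.
Qed.

Lemma tdefined_Usphere y : Usphere_domain y -> tdefined y Usphere.
Proof. by case=> y0 W0; apply: tdefined_Uterm. Qed.

Lemma tdot_only_Usphere : tdot_only a Usphere.
Proof. exact: tdot_only_Uterm. Qed.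

Lemma Ua_gt0 x : (3 <= n)%N -> enorm a < 1 -> enorm x <= 1 -> 0 < Ua a x.
Proof.
move=> n3 ha hx.
have W0 := Ua_den_gt0 ha hx.
have A1 := enorm2_lt1 ha; have s1 := enorm2_le1 hx.
have N3 : 3 <= N by rewrite (ler_nat R 3 n).
have := enorm2_sub_ge0 1 1 a x; rewrite !expr1n !mul1r mulr1 => dist_ge0.
(* U_a x = q^alpha (1 + (n-4)/4 (1 - |x|^2) q) and 0 <= (1 - |x|^2) q <= 1,
   because W - (1 - |x|^2)(1 - |a|^2) = |x - a|^2. *)
rewrite UaE /Uprofile.
have -> : enorm2 a * enorm2 x - 2 * edot a x + 1 = enorm2 a * enorm2 x + -2 * edot a x + 1
  by ring.
set W := enorm2 a * enorm2 x + -2 * edot a x + 1 in W0 *.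
set q := A / W.
have q0 : 0 < q by rewrite divr_gt0 // subr_gt0.
have -> : q `^ beta = q `^ alpha * q.
  by rewrite -{3}(powRr1 (ltW q0)) -powRD_gt0 //; congr (_ `^ _); field.
have u1 : (1 - enorm2 x) * q <= 1.
  rewrite mulrA ler_pdivrMr // mul1r /W.
  by move: dist_ge0; set s := enorm2 x; set t := edot a x; set b := enorm2 a; lra.
have u0 : 0 <= (1 - enorm2 x) * q by apply: mulr_ge0; lra.
have -> : q `^ alpha + (N - 4) / 4 * (1 - enorm2 x) * (q `^ alpha * q) =
  q `^ alpha * (1 + (N - 4) / 4 * ((1 - enorm2 x) * q)) by ring.
rewrite mulr_gt0 ?powR_gt0 //.
by move: u1 u0 N3; set u := (1 - enorm2 x) * q; nra.
Qed.

Let powR_mbeta w : 0 < w -> w `^ (- beta) = w `^ (- alpha) * w^-1.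
Proof. by move=> w0; rewrite -(powR_inv1 (ltW w0)) -powRD_gt0 //; congr (_ `^ _); field. Qed.

Let A_powR_beta : enorm a < 1 -> A `^ beta = A `^ alpha * A.
Proof.
move=> ha; have A0 : 0 < A by rewrite subr_gt0 enorm2_lt1.
by rewrite -{3}(powRr1 (ltW A0)) -powRD_gt0 //; congr (_ `^ _); field.
Qed.

Lemma teval_tlap_tlap_Uball x : Uball_domain x -> teval x (tlap a (tlap a Uball)) = 0.
Proof.
rewrite /Uball_domain => w0; rewrite /= in w0.
cbv beta iota zeta delta [Uball Uterm Wterm tlap tds tdt tderiv tadd tmul teval].
set w := enorm2 a * enorm2 x + -2 * edot a x + 1 in w0 *.
rewrite !powR_mbeta // !powR_inv1 ?ltW //.
(* the only power left is W^-alpha, so the identity is rational in it *)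
set P := w `^ (- alpha); clearbody P; rewrite /w in w0 *.
by field; rewrite gt_eqF.
Qed.

Section OnSphere.
Variable x : V.
Hypotheses (ha : enorm a < 1) (hx : enorm x = 1).
Local Notation w := (enorm2 a + -2 * edot a x + 1).

Let s1 : enorm2 x = 1. Proof. exact: enorm2_eq1. Qed.
Let edot_xx : edot x x = 1. Proof. exact: s1. Qed.

Lemma Ua_den_sphere_gt0 : 0 < w.
Proof. by have := @Ua_den_gt0 x ha; rewrite hx s1 mulr1; apply. Qed.

Lemma teval_Uball_sphere : teval x Uball = A `^ alpha * w `^ (- alpha).
Proof.
cbv beta iota zeta delta [Uball Uterm Wterm teval].
by rewrite s1 mulr1; ring.
Qed.

Lemma teval_tdir_Uball_sphere : teval x (tdir x Uball) = - alpha * teval x Uball.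
Proof.
have w0 := Ua_den_sphere_gt0.
cbv beta iota zeta delta [Uball Uterm Wterm tdir tderiv tadd tmul teval].
rewrite s1 edot_xx !mulr1 !powR_mbeta // !powR_inv1 ?ltW // A_powR_beta //.
set P := w `^ (- alpha); clearbody P.
by field; rewrite lt0r_neq0.
Qed.

Lemma B33_teval_sphere :
  - teval x (tdir x (tlap a Uball)) - alpha * teval x (tdir x (tdir x Uball))
  - (N / 2) * teval x (tlap a Usphere)
  + ((N - 4) * (N ^+ 2 - 3 * N + 4) / 4) * teval x Uball
  = (N * (N - 2) * (N - 4) / 4) * (A `^ alpha * A ^+ 3 * (w `^ (- alpha) * w ^- 3)).
Proof.
have w0 := Ua_den_sphere_gt0.
cbv beta iota zeta delta [Uball Usphere Uterm Wterm tlap tds tdt tdir tderiv tadd tmul teval].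
rewrite s1 edot_xx !powR1 !mulr1 !powR_mbeta // !powR_inv1 ?ltW // A_powR_beta //.
set P := w `^ (- alpha); clearbody P.
by field; rewrite lt0r_neq0.
Qed.

End OnSphere.

Lemma Ua_smooth : enorm a < 1 -> smooth_on Uball_domain (Ua a).
Proof.
move=> ha; apply: (smooth_on_eq open_Uball_domain (fun y Oy => Ua_Uball ha Oy)).
by apply: (smooth_on_teval open_Uball_domain) => y; exact: tdefined_Uball.
Qed.

Lemma lap_Ua y : enorm a < 1 -> Uball_domain y -> lap (Ua a) y = teval y (tlap a Uball).
Proof.
move=> ha Oy; rewrite (lap_eq open_Uball_domain (fun z Oz => Ua_Uball ha Oz) Oy).
exact: lap_teval open_Uball_domain tdefined_Uball tdot_only_Uball Oy.
Qed.

Lemma Ua_biharmonic x : enorm a < 1 -> enorm x < 1 -> lap (lap (Ua a)) x = 0.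
Proof.
move=> ha hx; have Ox := closed_ball_Uball_domain ha (ltW hx).
rewrite (lap_eq open_Uball_domain (fun y Oy => lap_Ua ha Oy) Ox).
rewrite (lap_teval open_Uball_domain (fun y Oy => tdefined_tlap a (tdefined_Uball Oy))
  (tdot_only_tlap tdot_only_Uball) Ox).
exact: teval_tlap_tlap_Uball.
Qed.

Lemma drad_Ua x : enorm a < 1 -> enorm x = 1 -> drad (Ua a) x = - alpha * Ua a x.
Proof.
move=> ha hx; have Ox : Uball_domain x by apply: closed_ball_Uball_domain; rewrite ?hx.
rewrite /drad (derive_teval_eq open_Uball_domain tdefined_Uball x (fun z Oz => Ua_Uball ha Oz) Ox).
by rewrite (Ua_Uball ha Ox) teval_tdir_Uball_sphere.
Qed.

Lemma drad_lap_Ua x : enorm a < 1 -> Uball_domain x ->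
  drad (lap (Ua a)) x = teval x (tdir x (tlap a Uball)).
Proof.
move=> ha Ox; apply: (derive_teval_eq open_Uball_domain _ x (fun y Oy => lap_Ua ha Oy) Ox).
by move=> y Oy; exact/tdefined_tlap/tdefined_Uball.
Qed.

Lemma drad2_Ua x : enorm a < 1 -> Uball_domain x ->
  drad2 (Ua a) x = teval x (tdir x (tdir x Uball)).
Proof.
move=> ha Ox; apply: (derive_teval_eq open_Uball_domain _ x _ Ox) => y Oy.
  exact/tdefined_tdir/tdefined_Uball.
exact: (derive_teval_eq open_Uball_domain tdefined_Uball x (fun z Oz => Ua_Uball ha Oz) Oy).
Qed.

Lemma sph_lap_Ua x : enorm a < 1 -> enorm x = 1 ->
  sph_lap (Ua a) x = teval x (tlap a Usphere).
Proof.
move=> ha hx; have Sx := sphere_Usphere_domain ha hx.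
rewrite /sph_lap (lap_eq open_Usphere_domain (fun y Oy => Ua_Usphere ha Oy) Sx).
exact: lap_teval open_Usphere_domain tdefined_Usphere tdot_only_Usphere Sx.
Qed.

Lemma B33_Ua x : n != 4%N -> enorm a < 1 -> enorm x = 1 ->
  B33 (Ua a) x = (N * (N - 2) * (N - 4) / 4) * Ua a x `^ ((N + 2) / (N - 4)).
Proof.
move=> n4 ha hx; have Ox : Uball_domain x by apply: closed_ball_Uball_domain; rewrite ?hx.
rewrite /B33 drad_lap_Ua // drad2_Ua // sph_lap_Ua // (Ua_Uball ha Ox).
rewrite B33_teval_sphere // teval_Uball_sphere // powR_critical ?Ua_den_sphere_gt0 ?eqr_nat //.
by rewrite subr_gt0 enorm2_lt1.
Qed.

End UaAsTerm.

Theorem mainTheorem13 (R : realType) (n : nat) (a : 'rV[R]_n) :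
  (3 <= n)%N -> n != 4%N -> enorm a < 1 ->
  [/\ (exists O : set 'rV[R]_n,
         open O /\ [set x | enorm x <= 1] `<=` O /\ smooth_on O (Ua a)),
      (forall x : 'rV[R]_n, enorm x <= 1 -> 0 < Ua a x),
      (forall x : 'rV[R]_n, enorm x < 1 -> lap (lap (Ua a)) x = 0),
      (forall x : 'rV[R]_n, enorm x = 1 ->
         drad (Ua a) x = - ((n%:R - 4) / 2) * Ua a x) &
      (forall x : 'rV[R]_n, enorm x = 1 ->
         B33 (Ua a) x
         = (n%:R * (n%:R - 2) * (n%:R - 4) / 4) * (Ua a x) `^ ((n%:R + 2) / (n%:R - 4)))].
Proof.
move=> n3 n4 ha; split=> [|x|x|x|x].
- exists (Uball_domain a); split; first exact: open_Uball_domain.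
  by split; [move=> y; exact: closed_ball_Uball_domain | exact: Ua_smooth].
- exact: Ua_gt0.
- exact: Ua_biharmonic.
- exact: drad_Ua.
- exact: B33_Ua.
Qed.
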